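(* Let $E\subseteq\mathrm{Lim}(\omega_1)$ be stationary and let $S=(x_\gamma)_{\gamma\in E}$ be a $\clubsuit(E)$-sequence. Let $\kappa$ be any cardinal and $P=\Pi^*_{\kappa}\mathrm{Fn}(\omega,2)$. Then $P$ forces that $S$ is a $\clubsuit(E)$-sequence.
   Context: $\mathrm{Lim}(\omega_1)$ is the set of countable limit ordinals. A $\clubsuit(E)$-sequence is $(x_\gamma)_{\gamma\in E}$ with each $x_\gamma$ a cofinal subset of $\gamma$ of order type $\omega$ such that for every $y\in[\omega_1]^{\aleph_1}$ there is $\gamma\in E$ with $x_\gamma\subseteq y$. $\mathrm{Fn}(\omega,2)$ is the set of finite partial functions from $\omega$ to $2$ ordered by reverse inclusion. $\Pi^*_{\kappa}\mathrm{Fn}(\omega,2)$ is the set of functions $p:\kappa\to\mathrm{Fn}(\omega,2)$ with $\mathrm{supp}(p)=\{i:p(i)\neq\emptyset\}$ countable, ordered by $p\leq q$ iff $p(i)\supseteq q(i)$ for all $i<\kappa$ and $\{i : p(i)\supsetneq q(i)\supsetneq\emptyset\}$ is finite. *)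

From Stdlib Require Import List.
Set Implicit Arguments.

Definition countable {T : Type} (A : T -> Prop) : Prop :=
  exists f : T -> nat, forall x y, A x -> A y -> f x = f y -> x = y.

Definition finite_set {T : Type} (A : T -> Prop) : Prop :=
  exists l : list T, forall x, A x -> In x l.

Definition is_omega1 (W : Type) (lt : W -> W -> Prop) : Prop :=
  (forall a, ~ lt a a) /\
  (forall a b c, lt a b -> lt b c -> lt a c) /\
  (forall a b, lt a b \/ a = b \/ lt b a) /\
  well_founded lt /\
  ~ countable (fun _ : W => True) /\
  (forall a, countable (fun b => lt b a)).

Definition le_of {W : Type} (lt : W -> W -> Prop) (a b : W) : Prop :=
  lt a b \/ a = b.

Definition is_limit {W : Type} (lt : W -> W -> Prop) (g : W) : Prop :=
  (exists b, lt b g) /\ (forall b, lt b g -> exists c, lt b c /\ lt c g).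

Definition unbounded {W : Type} (lt : W -> W -> Prop) (A : W -> Prop) : Prop :=
  forall a, exists b, A b /\ le_of lt a b.

Definition club {W : Type} (lt : W -> W -> Prop) (C : W -> Prop) : Prop :=
  unbounded lt C /\
  (forall g, is_limit lt g ->
     (forall b, lt b g -> exists c, C c /\ lt b c /\ lt c g) -> C g).

Definition stationary {W : Type} (lt : W -> W -> Prop) (E : W -> Prop) : Prop :=
  forall C, club lt C -> exists g, C g /\ E g.

(* x is a cofinal subset of g of order type omega *)
Definition cofinal_omega {W : Type} (lt : W -> W -> Prop) (x : W -> Prop) (g : W)
  : Prop :=
  (forall d, x d -> lt d g) /\
  (forall b, lt b g -> exists d, x d /\ lt b d) /\
  ~ finite_set x /\
  (forall d, x d -> finite_set (fun e => x e /\ lt e d)).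

Definition clubsuit_seq {W : Type} (lt : W -> W -> Prop) (E : W -> Prop)
  (xs : W -> W -> Prop) : Prop :=
  (forall g, E g -> cofinal_omega lt (xs g) g) /\
  (forall y : W -> Prop, ~ countable y ->
     exists g, E g /\ (forall d, xs g d -> y d)).

(* a finite partial function omega -> 2 *)
Definition Fn_elt (f : nat -> option bool) : Prop :=
  exists N, forall n, N <= n -> f n = None.

Definition fn_ext (f g : nat -> option bool) : Prop :=
  forall n b, g n = Some b -> f n = Some b.

Definition fn_nonempty (f : nat -> option bool) : Prop :=
  exists n, f n <> None.

Definition fn_sext (f g : nat -> option bool) : Prop :=
  fn_ext f g /\ exists n, g n = None /\ f n <> None.

(* conditions of Pi^*_K Fn(omega,2), K an index set of size kappa *)
Definition PiStar_cond {K : Type} (p : K -> nat -> option bool) : Prop :=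
  (forall i, Fn_elt (p i)) /\ countable (fun i => fn_nonempty (p i)).

(* p <= q  (p is stronger) *)
Definition PiStar_le {K : Type} (p q : K -> nat -> option bool) : Prop :=
  (forall i, fn_ext (p i) (q i)) /\
  finite_set (fun i => fn_sext (p i) (q i) /\ fn_sext (q i) (fun _ => None)).

(* A name for a subset of W is given by Y : W -> cond -> Prop, meaning
   the name { (alpha-check, p) | Y alpha p }.  Every name for a subset of a
   ground-model set is equivalent to one of this form. *)
Definition forces_mem {K W : Type} (Y : W -> (K -> nat -> option bool) -> Prop)
  (q : K -> nat -> option bool) (a : W) : Prop :=
  forall r, PiStar_cond r -> PiStar_le r q ->
    exists s p, PiStar_cond s /\ PiStar_le s r /\
                PiStar_cond p /\ Y a p /\ PiStar_le s p.

Definition forces_unbounded {K W : Type} (lt : W -> W -> Prop)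
  (Y : W -> (K -> nat -> option bool) -> Prop) (p : K -> nat -> option bool)
  : Prop :=
  forall b r, PiStar_cond r -> PiStar_le r p ->
    exists s a, PiStar_cond s /\ PiStar_le s r /\ le_of lt b a /\ forces_mem Y s a.

Definition forces_clubsuit_hit {K W : Type} (E : W -> Prop) (xs : W -> W -> Prop)
  (Y : W -> (K -> nat -> option bool) -> Prop) (p : K -> nat -> option bool)
  : Prop :=
  forall r, PiStar_cond r -> PiStar_le r p ->
    exists s g, PiStar_cond s /\ PiStar_le s r /\ E g /\
                (forall d, xs g d -> forces_mem Y s d).

From Stdlib Require Import List Arith Lia Classical ClassicalEpsilon FunctionalExtensionality Cantor.

(* Every extension s <= q splits as a pure extension q' of q (one agreeing with
   q on the support of q) patched by a finitely supported h living on the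
   support of q, and pure extensions along a countable chain glue together.
   Given r <= p, build by recursion on omega_1 a pure-decreasing chain R_d with
   patches H_d and points A_d >= d such that R_d patched by H_d forces A_d into
   Y.  If every fibre {A_d | H_d = h} were countable, closing off under these
   fibres along an omega-sequence with supremum s would give A_s < s, because
   the finite patch H_s already lives on the support of an earlier R_x.  So
   some fibre is uncountable, the clubsuit sequence guesses an x_gamma inside
   it, and a pure lower bound of the countably many R_d involved, patched by h,
   forces x_gamma into Y. *)

Set Implicit Arguments.

Notation cond K := (K -> nat -> option bool).

Lemma to_nat_inj (a b : nat * nat) : to_nat a = to_nat b -> a = b.
Proof. intros E. rewrite <- (cancel_of_to a), <- (cancel_of_to b), E. reflexivity. Qed.

Lemma countable_preimage {T U} (A : T -> Prop) (B : U -> Prop) (phi : T -> U) :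
  (forall x, A x -> B (phi x)) ->
  (forall x y, A x -> A y -> phi x = phi y -> x = y) ->
  countable B -> countable A.
Proof.
  intros HAB Hinj [f Hf]. exists (fun x => f (phi x)).
  intros x y Ax Ay E. apply Hinj; auto.
Qed.

Lemma countable_sub {T} (A B : T -> Prop) :
  (forall x, A x -> B x) -> countable B -> countable A.
Proof. intros HAB. apply countable_preimage with (phi := fun x => x); auto. Qed.

Lemma countable_Union {T U} (I : T -> Prop) (A : T -> U -> Prop) :
  countable I -> (forall t, I t -> countable (A t)) ->
  countable (fun u => exists t, I t /\ A t u).
Proof.
  intros [g Hg] HA.
  destruct (classic (exists t, I t)) as [[t0 _]|Hnone].
  2: { exists (fun _ => 0). intros x y [t [It _]]. exfalso. eauto. }
  pose (idx u := epsilon (inhabits t0) (fun t => I t /\ A t u)).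
  pose (code t := epsilon (inhabits (fun _ : U => 0))
                    (fun f => forall x y, A t x -> A t y -> f x = f y -> x = y)).
  assert (Hidx : forall u, (exists t, I t /\ A t u) -> I (idx u) /\ A (idx u) u)
    by (intros u; apply (epsilon_spec (inhabits t0) (fun t => I t /\ A t u))).
  assert (Hcode : forall t, I t -> forall x y, A t x -> A t y -> code t x = code t y -> x = y)
    by (intros t It; apply (epsilon_spec (inhabits (fun _ : U => 0))), HA, It).
  exists (fun u => to_nat (g (idx u), code (idx u) u)).
  intros x y Hx Hy E.
  apply to_nat_inj in E. injection E as E1 E2.
  destruct (Hidx x Hx) as [Ix Ax], (Hidx y Hy) as [Iy Ay].
  assert (Eidx : idx x = idx y) by (apply Hg; auto).
  rewrite <- Eidx in Ay, E2. exact (Hcode _ Ix x y Ax Ay E2).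
Qed.

Lemma countable_singleton {T} (a : T) : countable (fun x => x = a).
Proof. exists (fun _ => 0). intros x y -> ->. reflexivity. Qed.

Lemma countable_union {T} (A B : T -> Prop) :
  countable A -> countable B -> countable (fun x => A x \/ B x).
Proof.
  intros cA cB.
  apply countable_sub with (fun x => exists b : bool, True /\ (if b then A x else B x)).
  - intros x [Ax|Bx]; [exists true|exists false]; auto.
  - apply countable_Union.
    + exists (fun b : bool => if b then 0 else 1). intros [] [] _ _ E; congruence.
    + intros []; auto.
Qed.

Lemma countable_image {T U} (A : T -> Prop) (phi : T -> U) :
  countable A -> countable (fun y => exists x, A x /\ y = phi x).
Proof. intros cA. apply countable_Union; auto. intros t _. apply countable_singleton. Qed.

Fixpoint list_code {T} (c : T -> nat) (l : list T) : nat :=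
  match l with nil => 0 | x :: l' => S (to_nat (c x, list_code c l')) end.

Lemma countable_lists {T} (A : T -> Prop) : countable A -> countable (Forall A).
Proof.
  intros [c Hc]. exists (list_code c).
  intros l1 l2 H1. revert l2.
  induction H1 as [|x l1 Ax H1 IH]; intros [|y l2] H2 E; cbn [list_code] in E;
    try discriminate; auto.
  inversion H2 as [|? ? Ay H2']; subst.
  apply Nat.succ_inj, to_nat_inj in E. injection E as Exy El. f_equal; auto.
Qed.

Lemma countable_eventually_const {T} (A : T -> Prop) (t0 : T) :
  countable A ->
  countable (fun f : nat -> T => (forall n, A (f n)) /\ exists N, forall n, N <= n -> f n = t0).
Proof.
  intros cA.
  apply countable_sub with (fun f => exists l, Forall A l /\ f = fun n => nth n l t0).
  - intros f [Af [N HN]]. exists (map f (seq 0 N)). split.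
    + apply Forall_map, Forall_forall. auto.
    + apply functional_extensionality. intros n.
      destruct (Nat.lt_ge_cases n N).
      * rewrite nth_indep with (d' := f 0) by (rewrite length_map, length_seq; lia).
        rewrite map_nth, seq_nth by lia. reflexivity.
      * rewrite nth_overflow by (rewrite length_map, length_seq; lia). auto.
  - apply countable_image, countable_lists, cA.
Qed.

Lemma countable_Fn : countable Fn_elt.
Proof.
  apply countable_sub with
    (fun f => (forall n : nat, True) /\ exists N, forall n, N <= n -> f n = None).
  - intros f [N HN]. split; eauto.
  - apply (@countable_eventually_const _ (fun _ : option bool => True) None).
    exists (fun o : option bool => match o with None => 0 | Some false => 1 | Some true => 2 end).
    intros [[]|] [[]|] _ _ E; congruence.
Qed.

Lemma finite_common_bound {T} (A : T -> Prop) (P : T -> nat -> Prop) :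
  finite_set A -> (forall i n m, n <= m -> P i n -> P i m) ->
  (forall i, A i -> exists n, P i n) -> exists N, forall i, A i -> P i N.
Proof.
  intros [L HL] Pmono HP.
  enough (HN : exists N, forall i, In i L -> A i -> P i N)
    by (destruct HN as [N HN]; exists N; auto).
  clear HL. induction L as [|i0 L [N HN]].
  - exists 0. intros i [].
  - destruct (classic (A i0)) as [A0|A0].
    + destruct (HP i0 A0) as [M HM]. exists (N + M).
      intros i [<-|Hi] Ai; [apply Pmono with M|apply Pmono with N]; auto; lia.
    + exists N. intros i [<-|Hi] Ai; [contradiction|auto].
Qed.

Definition fn_empty : nat -> option bool := fun _ => None.

Lemma fn_empty_eq f : ~ fn_nonempty f -> f = fn_empty.
Proof.
  intros Hf. apply functional_extensionality. intros n. unfold fn_empty.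
  destruct (f n) eqn:E; auto. exfalso. apply Hf. exists n. congruence.
Qed.

Lemma fn_ext_nonempty f g : fn_ext f g -> fn_nonempty g -> fn_nonempty f.
Proof.
  intros Hfg [n Hn]. exists n. destruct (g n) as [b|] eqn:E; [|congruence].
  rewrite (Hfg n b E). discriminate.
Qed.

Lemma fn_ext_Fn f g : fn_ext f g -> Fn_elt f -> Fn_elt g.
Proof.
  intros Hfg [N HN]. exists N. intros n Hn.
  destruct (g n) as [b|] eqn:E; auto.
  specialize (Hfg n b E). rewrite HN in Hfg; [discriminate|exact Hn].
Qed.

Lemma fn_ext_eq f g : fn_ext f g -> ~ fn_sext f g -> f = g.
Proof.
  intros Hfg Hs. apply functional_extensionality. intros n.
  destruct (g n) as [b|] eqn:E; [exact (Hfg n b E)|].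
  destruct (f n) eqn:Ef; auto.
  exfalso. apply Hs. split; auto. exists n. split; auto. congruence.
Qed.

Lemma fn_sext_empty f : fn_sext f fn_empty <-> fn_nonempty f.
Proof.
  split.
  - intros [_ [n [_ Hn]]]. exists n. exact Hn.
  - intros [n Hn]. split; [discriminate|]. exists n. auto.
Qed.

Lemma PiStar_le_trans {K} (a b c : cond K) :
  PiStar_le a b -> PiStar_le b c -> PiStar_le a c.
Proof.
  intros [Eab [L1 HL1]] [Ebc [L2 HL2]]. split.
  - intros i n x E. apply Eab, Ebc, E.
  - exists (L1 ++ L2). intros i [Sac Sc]. apply in_or_app.
    destruct (classic (fn_sext (b i) (c i))) as [Sbc|Sbc].
    + right. apply HL2. auto.
    + left. apply HL1. rewrite (fn_ext_eq (Ebc i) Sbc). auto.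
Qed.

Lemma forces_mem_le {K W} (Y : W -> cond K -> Prop) s1 s2 a :
  PiStar_le s1 s2 -> forces_mem Y s2 a -> forces_mem Y s1 a.
Proof. intros Hle Hf r Cr Hr. apply Hf; auto. eapply PiStar_le_trans; eauto. Qed.

Definition pure_ext {K} (s q : cond K) : Prop :=
  forall i, fn_nonempty (q i) -> s i = q i.

Lemma pure_ext_refl {K} (q : cond K) : pure_ext q q.
Proof. intros i _. reflexivity. Qed.

Lemma pure_ext_nonempty {K} (s q : cond K) i :
  pure_ext s q -> fn_nonempty (q i) -> fn_nonempty (s i).
Proof. intros Hsq Hq. rewrite Hsq; auto. Qed.

Lemma pure_ext_trans {K} (a b c : cond K) : pure_ext a b -> pure_ext b c -> pure_ext a c.
Proof.
  intros Hab Hbc i Hc. rewrite <- (Hbc i Hc). apply Hab. rewrite (Hbc i Hc). exact Hc.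
Qed.

Lemma pure_ext_le {K} (s q : cond K) : pure_ext s q -> PiStar_le s q.
Proof.
  intros Hsq. split.
  - intros i n b E. rewrite Hsq; [exact E|]. exists n. congruence.
  - exists nil. intros i [[_ [n [Hq0 Hn]]] Hq]. apply fn_sext_empty in Hq.
    rewrite (Hsq i Hq) in Hn. contradiction.
Qed.

Definition patch {K} (q h : cond K) : cond K :=
  fun i n => match h i n with Some b => Some b | None => q i n end.

Definition patch_for {K} (h q : cond K) : Prop :=
  (forall i, Fn_elt (h i)) /\ (forall i, fn_nonempty (h i) -> fn_nonempty (q i)) /\
  finite_set (fun i => fn_nonempty (h i)).

Lemma patch_for_pure_ext {K} (h q q' : cond K) :
  patch_for h q -> pure_ext q' q -> patch_for h q'.
Proof.
  intros [Fh [Sh Lh]] Hq'. split; [|split]; auto.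
  intros i Hi. apply pure_ext_nonempty with q; auto.
Qed.

Lemma patch_cond {K} (q h : cond K) :
  PiStar_cond q -> patch_for h q -> PiStar_cond (patch q h).
Proof.
  intros [Fq Cq] [Fh [Sh _]]. split.
  - intros i. destruct (Fq i) as [N1 H1], (Fh i) as [N2 H2]. exists (N1 + N2).
    intros n Hn. unfold patch. rewrite H2 by lia. apply H1; lia.
  - apply countable_sub with (fun i => fn_nonempty (q i)); auto.
    intros i [n Hn]. unfold patch in Hn. destruct (h i n) eqn:E.
    + apply Sh. exists n. congruence.
    + exists n. exact Hn.
Qed.

Lemma patch_pure_ext {K} (q1 q2 h : cond K) :
  pure_ext q1 q2 -> patch_for h q2 -> pure_ext (patch q1 h) (patch q2 h).
Proof.
  intros Hq [_ [Sh _]] i [n Hn]. unfold patch. rewrite Hq; [reflexivity|].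
  unfold patch in Hn. destruct (h i n) eqn:E.
  - apply Sh. exists n. congruence.
  - exists n. exact Hn.
Qed.

Lemma PiStar_le_split {K} (s q : cond K) :
  PiStar_cond s -> PiStar_le s q ->
  exists q' h, PiStar_cond q' /\ pure_ext q' q /\ patch_for h q /\ patch q' h = s.
Proof.
  intros [Fs Cs] [Ext [L HL]].
  pose (q' i := if excluded_middle_informative (fn_nonempty (q i)) then q i else s i).
  pose (h i := if excluded_middle_informative (fn_sext (s i) (q i) /\ fn_nonempty (q i))
               then s i else fn_empty).
  assert (Ext' : forall i, fn_ext (s i) (q' i)).
  { intros i. unfold q'. destruct (excluded_middle_informative _) as [Hq|Hq]; [apply Ext|].
    intros n b E. exact E. }
  exists q', h. split; [|split; [|split]].
  - split.
    + intros i. apply fn_ext_Fn with (s i); auto.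
    + apply countable_sub with (fun i => fn_nonempty (s i)); auto.
      intros i. apply fn_ext_nonempty, Ext'.
  - intros i Hq. unfold q'. destruct (excluded_middle_informative _); tauto.
  - unfold h. split; [|split].
    + intros i. destruct (excluded_middle_informative _) as [Hi|Hi]; auto. exists 0. reflexivity.
    + intros i. destruct (excluded_middle_informative _) as [[_ Hq]|Hi]; auto.
      intros [n Hn]. exfalso. apply Hn. reflexivity.
    + exists L. intros i. destruct (excluded_middle_informative _) as [[Hs Hq]|Hi].
      * intros _. apply HL. split; auto. apply fn_sext_empty. exact Hq.
      * intros [n Hn]. exfalso. apply Hn. reflexivity.
  - apply functional_extensionality. intros i. apply functional_extensionality. intros n.
    unfold patch, h, q'.
    destruct (excluded_middle_informative (fn_sext (s i) (q i) /\ fn_nonempty (q i)))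
      as [[Hs Hq]|Hn].
    + destruct (s i n) eqn:E; auto.
      destruct (excluded_middle_informative _) as [Hq'|Hq']; [|contradiction].
      destruct (q i n) as [b|] eqn:Eq; auto.
      rewrite (Ext i n b Eq) in E. discriminate.
    + unfold fn_empty. destruct (excluded_middle_informative (fn_nonempty (q i))) as [Hq|Hq]; auto.
      rewrite (fn_ext_eq (Ext i)); auto.
Qed.

Lemma countable_patches {K} (q : cond K) :
  countable (fun i => fn_nonempty (q i)) -> countable (fun h => patch_for h q).
Proof.
  intros [e He].
  (* Via [e], a patch becomes an eventually empty sequence of finite partial functions. *)
  pose (reindex (h : cond K) m :=
          match excluded_middle_informative (exists i, fn_nonempty (h i) /\ e i = m) with
          | left E => h (proj1_sig (constructive_indefinite_description _ E))
          | right _ => fn_empty end).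
  assert (Hreindex : forall h, patch_for h q ->
            forall i, fn_nonempty (q i) -> reindex h (e i) = h i).
  { intros h [_ [Sh _]] i Hq. unfold reindex.
    destruct (excluded_middle_informative _) as [E|E].
    - destruct (constructive_indefinite_description _ E) as [j [Hj Ej]]. simpl.
      f_equal. apply He; auto.
    - symmetry. apply fn_empty_eq. intros Hi. apply E. exists i. auto. }
  apply countable_preimage with
    (B := fun f => (forall m, Fn_elt (f m)) /\ exists N, forall m, N <= m -> f m = fn_empty)
    (phi := reindex).
  - intros h Hh. split.
    + intros m. unfold reindex. destruct (excluded_middle_informative _); [apply Hh|].
      exists 0. reflexivity.
    + destruct Hh as [_ [Sh Lh]].
      destruct (finite_common_bound (fun i n => e i < n) Lh) as [N HN].
      * intros i n m Hnm Hi. lia.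
      * intros i _. exists (S (e i)). lia.
      * exists N. intros m Hm. unfold reindex.
        destruct (excluded_middle_informative _) as [[i [Hi Ei]]|E]; [|reflexivity].
        specialize (HN i Hi). lia.
  - intros h1 h2 H1 H2 E. apply functional_extensionality. intros i.
    destruct (classic (fn_nonempty (q i))) as [Hq|Hq].
    + rewrite <- (Hreindex h1 H1 i Hq), <- (Hreindex h2 H2 i Hq), E. reflexivity.
    + destruct H1 as [_ [S1 _]], H2 as [_ [S2 _]].
      rewrite (@fn_empty_eq (h1 i)), (@fn_empty_eq (h2 i)); auto.
  - apply countable_eventually_const, countable_Fn.
Qed.

Definition glue {K I} (r : cond K) (f : I -> cond K) : cond K :=
  fun i => match excluded_middle_informative (exists j, fn_nonempty (f j i)) with
           | left E => f (proj1_sig (constructive_indefinite_description _ E)) i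
           | right _ => r i end.

Section Glue.
Variables (K I : Type) (r : cond K) (f : I -> cond K).

Lemma glue_eq_base i : (forall j, ~ fn_nonempty (f j i)) -> glue r f i = r i.
Proof.
  intros Hi. unfold glue.
  destruct (excluded_middle_informative _) as [[j Hj]|E]; [|reflexivity].
  exfalso. exact (Hi j Hj).
Qed.

Lemma glue_support i :
  fn_nonempty (glue r f i) -> fn_nonempty (r i) \/ exists j, fn_nonempty (f j i).
Proof.
  intros Hg. destruct (classic (exists j, fn_nonempty (f j i))) as [E|E]; auto.
  left. rewrite <- glue_eq_base; eauto.
Qed.

Hypothesis f_comparable : forall j j', pure_ext (f j) (f j') \/ pure_ext (f j') (f j).

Lemma glue_pure_ext j : pure_ext (glue r f) (f j).
Proof.
  intros i Hj. unfold glue.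
  destruct (excluded_middle_informative _) as [E|E]; [|exfalso; eauto].
  destruct (constructive_indefinite_description _ E) as [j' Hj']. simpl.
  destruct (f_comparable j j') as [H|H]; [symmetry|]; apply H; assumption.
Qed.

Hypothesis f_pure : forall j, pure_ext (f j) r.

Lemma glue_pure_ext_base : pure_ext (glue r f) r.
Proof.
  intros i Hr. destruct (classic (exists j, fn_nonempty (f j i))) as [[j Hj]|E].
  - rewrite (glue_pure_ext Hj). apply f_pure, Hr.
  - apply glue_eq_base. eauto.
Qed.

Hypotheses (f_cond : forall j, PiStar_cond (f j)) (r_cond : PiStar_cond r)
  (I_countable : countable (fun _ : I => True)).

Lemma glue_cond : PiStar_cond (glue r f).
Proof.
  destruct r_cond as [Fr Cr]. split.
  - intros i. destruct (classic (exists j, fn_nonempty (f j i))) as [[j Hj]|E].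
    + rewrite (glue_pure_ext Hj). apply f_cond.
    + rewrite glue_eq_base; eauto.
  - apply countable_sub with
      (fun i => fn_nonempty (r i) \/ exists j, True /\ fn_nonempty (f j i)).
    + intros i Hi. destruct (glue_support i Hi) as [|[j Hj]]; eauto.
    + apply countable_union; auto. apply countable_Union; auto.
      intros j _. apply f_cond.
Qed.

End Glue.

Lemma well_founded_minimal {T} (R : T -> T -> Prop) (P : T -> Prop) w :
  well_founded R -> P w -> exists m, P m /\ forall y, R y m -> ~ P y.
Proof.
  intros Wf Pw. apply NNPP. intros Hn.
  enough (Hnot : forall x, ~ P x) by (exact (Hnot w Pw)).
  intros x. induction x as [x IH] using (well_founded_ind Wf). intros Px.
  apply Hn. exists x. auto.
Qed.

Section Omega1.
Variables (W : Type) (lt : W -> W -> Prop).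
Hypothesis Hw : is_omega1 lt.

Lemma omega1_wf : well_founded lt.
Proof. destruct Hw as (_ & _ & _ & Wf & _). exact Wf. Qed.

Lemma omega1_bounded (A : W -> Prop) : countable A -> exists b, forall a, A a -> lt a b.
Proof.
  destruct Hw as (_ & _ & Tri & _ & Unc & Seg). intros cA.
  apply NNPP. intros Hn. apply Unc.
  apply countable_sub with (fun c => exists a, A a /\ (lt c a \/ c = a)).
  - intros c _. apply NNPP. intros Hc. apply Hn. exists c. intros a Ha.
    destruct (Tri a c) as [H|[H|H]]; auto; exfalso; apply Hc; exists a; auto.
  - apply countable_Union; auto. intros a _.
    apply countable_union; [apply Seg|apply countable_singleton].
Qed.

Lemma omega1_sup (d : nat -> W) :
  exists s, (forall n, lt (d n) s) /\ forall x, lt x s -> exists n, le_of lt x (d n).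
Proof.
  destruct Hw as (_ & _ & Tri & Wf & _).
  destruct (omega1_bounded (A := fun w => exists n, True /\ w = d n)) as [b Hb].
  { apply countable_image. exists (fun n => n). auto. }
  destruct (well_founded_minimal (fun s => forall n, lt (d n) s) b Wf) as [s [Hs Hmin]].
  { intros n. apply Hb. eauto. }
  exists s. split; auto. intros x Hx. apply NNPP. intros H.
  apply (Hmin x Hx). intros n.
  destruct (Tri (d n) x) as [?|[?|?]]; auto; exfalso; apply H; exists n; unfold le_of; auto.
Qed.

Lemma iter_le_mono (f : W -> W) w :
  (forall x, lt x (f x)) -> forall n m, n <= m -> le_of lt (Nat.iter n f w) (Nat.iter m f w).
Proof.
  destruct Hw as (_ & Tr & _). intros Hf n m Hnm.
  induction Hnm as [|m _ IH]; [right; reflexivity|].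
  left. simpl. destruct IH as [IH|IH]; [eapply Tr; [exact IH|apply Hf]|rewrite IH; apply Hf].
Qed.

End Omega1.

Section Construction.
Variables (K W : Type) (lt : W -> W -> Prop) (Y : W -> cond K -> Prop) (p r : cond K).
Hypotheses (Hw : is_omega1 lt) (r_cond : PiStar_cond r) (r_le_p : PiStar_le r p)
  (Y_unbounded : forces_unbounded lt Y p).

Definition good_step (d : W) (q q' h : cond K) (a : W) : Prop :=
  PiStar_cond q' /\ pure_ext q' q /\ patch_for h q /\ PiStar_le (patch q' h) q /\
  le_of lt d a /\ forces_mem Y (patch q' h) a.

Lemma good_step_exists d q :
  PiStar_cond q -> PiStar_le q p -> exists q' h a, good_step d q q' h a.
Proof.
  intros Cq Lq. destruct (Y_unbounded d Cq Lq) as (s & a & Cs & Ls & Da & Fa).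
  destruct (PiStar_le_split Cs Ls) as (q' & h & Cq' & Pq' & Ph & <-).
  exists q', h, a. unfold good_step. tauto.
Qed.

Definition step (d : W) (q : cond K) : cond K * cond K * W :=
  epsilon (inhabits (q, q, d)) (fun t => good_step d q (fst (fst t)) (snd (fst t)) (snd t)).

Definition stage : W -> cond K * cond K * W :=
  Fix (omega1_wf Hw) (fun _ => (cond K * cond K * W)%type)
    (fun d rec => step d (glue r (fun x : {x | lt x d} =>
                                    fst (fst (rec (proj1_sig x) (proj2_sig x)))))).

Definition stage_cond d := fst (fst (stage d)).
Definition stage_patch d := snd (fst (stage d)).
Definition stage_point d := snd (stage d).
Definition below d := glue r (fun x : {x | lt x d} => stage_cond (proj1_sig x)).

Lemma stage_eq d : stage d = step d (below d).
Proof.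
  unfold stage at 1. rewrite Fix_eq; [reflexivity|].
  intros x f g Hfg. replace g with f; [reflexivity|].
  apply functional_extensionality_dep. intros y.
  apply functional_extensionality_dep. intros Hy. apply Hfg.
Qed.

Lemma stage_good_of_below d :
  PiStar_cond (below d) -> PiStar_le (below d) p ->
  good_step d (below d) (stage_cond d) (stage_patch d) (stage_point d).
Proof.
  intros Cb Lb. unfold stage_cond, stage_patch, stage_point. rewrite stage_eq.
  apply (epsilon_spec (inhabits (below d, below d, d))
           (fun t => good_step d (below d) (fst (fst t)) (snd (fst t)) (snd t))).
  destruct (good_step_exists d Cb Lb) as (q' & h & a & G). exists (q', h, a). exact G.
Qed.

Definition stage_ok (x : W) : Prop :=
  PiStar_cond (stage_cond x) /\ pure_ext (stage_cond x) r /\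
  forall y, lt y x -> pure_ext (stage_cond x) (stage_cond y).

Lemma below_spec d :
  (forall x, lt x d -> stage_ok x) ->
  PiStar_cond (below d) /\ pure_ext (below d) r /\
  forall x, lt x d -> pure_ext (below d) (stage_cond x).
Proof.
  intros Hok. destruct Hw as (_ & _ & Tri & _ & _ & Seg).
  pose (f := fun x : {x | lt x d} => stage_cond (proj1_sig x)).
  assert (f_comparable : forall j j', pure_ext (f j) (f j') \/ pure_ext (f j') (f j)).
  { intros [x Hx] [y Hy]. unfold f. simpl. destruct (Tri x y) as [Hxy|[<-|Hxy]].
    - right. apply Hok; auto.
    - left. apply pure_ext_refl.
    - left. apply Hok; auto. }
  assert (f_pure : forall j, pure_ext (f j) r) by (intros [x Hx]; apply Hok, Hx).
  split; [|split].
  - apply glue_cond; auto.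
    + intros [x Hx]. apply Hok, Hx.
    + apply countable_preimage with (B := fun x => lt x d) (phi := @proj1_sig _ _).
      * intros [x Hx] _. exact Hx.
      * intros [x Hx] [y Hy] _ _ E. simpl in E. subst y. f_equal. apply proof_irrelevance.
      * apply Seg.
  - apply glue_pure_ext_base; auto.
  - intros x Hx. exact (glue_pure_ext r f f_comparable (exist _ x Hx)).
Qed.

Lemma stage_ok_all d : stage_ok d.
Proof.
  induction d as [d IH] using (well_founded_ind (omega1_wf Hw)).
  destruct (below_spec IH) as (Cb & Pb & Pbx).
  destruct (stage_good_of_below Cb (PiStar_le_trans (pure_ext_le Pb) r_le_p))
    as (Cd & Pd & _).
  split; [|split]; auto.
  - eapply pure_ext_trans; eauto.
  - intros y Hy. eapply pure_ext_trans; eauto.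
Qed.

Lemma stage_cond_cond x : PiStar_cond (stage_cond x).
Proof. apply stage_ok_all. Qed.

Lemma stage_cond_pure_ext_base x : pure_ext (stage_cond x) r.
Proof. apply stage_ok_all. Qed.

Lemma stage_cond_chain x y : lt x y -> pure_ext (stage_cond y) (stage_cond x).
Proof. apply stage_ok_all. Qed.

Lemma below_pure_ext_base d : pure_ext (below d) r.
Proof. apply below_spec. intros x _. apply stage_ok_all. Qed.

Lemma stage_good d : good_step d (below d) (stage_cond d) (stage_patch d) (stage_point d).
Proof.
  destruct (below_spec (d := d) (fun x _ => stage_ok_all x)) as (Cb & Pb & _).
  apply stage_good_of_below; auto. eapply PiStar_le_trans; [apply pure_ext_le|]; eauto.
Qed.

Lemma stage_cond_mono x y i :
  le_of lt x y -> fn_nonempty (stage_cond x i) -> fn_nonempty (stage_cond y i).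
Proof.
  intros [Hxy| <-] Hx; auto. apply pure_ext_nonempty with (stage_cond x); auto.
  apply stage_cond_chain, Hxy.
Qed.

Lemma below_support d i :
  fn_nonempty (below d i) -> fn_nonempty (r i) \/ exists x, lt x d /\ fn_nonempty (stage_cond x i).
Proof.
  intros Hi. destruct (glue_support _ _ i Hi) as [|[[x Hx] Hxi]]; eauto.
Qed.

Definition fiber (h : cond K) (a : W) : Prop :=
  exists d, stage_patch d = h /\ stage_point d = a.

Lemma patch_below_sup (seq : nat -> W) s h :
  (forall n m, n <= m -> le_of lt (seq n) (seq m)) ->
  (forall x, lt x s -> exists n, le_of lt x (seq n)) ->
  patch_for h (below s) -> exists N, patch_for h (stage_cond (seq N)).
Proof.
  intros Hmono Hcof [Fh [Sh Lh]].
  destruct (finite_common_bound (fun i n => fn_nonempty (stage_cond (seq n) i)) Lh)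
    as [N HN].
  - intros i n m Hnm. apply stage_cond_mono, Hmono, Hnm.
  - intros i Hi. destruct (below_support s i (Sh i Hi)) as [Hr|[x [Hx Hxi]]].
    + exists 0. apply pure_ext_nonempty with r; auto. apply stage_cond_pure_ext_base.
    + destruct (Hcof x Hx) as [n Hn]. exists n. apply stage_cond_mono with x; auto.
  - exists N. split; [|split]; auto.
Qed.

Lemma fiber_uncountable : exists h, ~ countable (fiber h).
Proof.
  pose proof Hw as (Irr & Tr & _ & _ & Unc & _).
  apply NNPP. intros Hall.
  assert (Hc : forall h, countable (fiber h)) by (intros h; apply NNPP; eauto).
  pose (reach x a := a = x \/ exists h, patch_for h (stage_cond x) /\ fiber h a).
  assert (next_exists : forall x, exists b, forall a, reach x a -> lt a b).
  { intros x. apply (omega1_bounded Hw). apply countable_union; [apply countable_singleton|].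
    apply countable_Union; auto. apply countable_patches, stage_cond_cond. }
  pose (next x := epsilon (inhabits x) (fun b => forall a, reach x a -> lt a b)).
  assert (Hnext : forall x a, reach x a -> lt a (next x))
    by (intros x; apply (epsilon_spec (inhabits x)), next_exists).
  destruct (classic (inhabited W)) as [[w0]|Hempty].
  2: { apply Unc. exists (fun _ => 0). intros x. exfalso. apply Hempty. constructor. exact x. }
  pose (seq n := Nat.iter n next w0).
  assert (Hmono : forall n m, n <= m -> le_of lt (seq n) (seq m)).
  { apply (iter_le_mono Hw). intros x. apply Hnext. left. reflexivity. }
  destruct (omega1_sup Hw seq) as (s & Hub & Hcof).
  destruct (stage_good s) as (_ & _ & Hpatch & _ & Hsa & _).
  destruct (patch_below_sup seq Hmono Hcof Hpatch) as [N HN].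
  assert (Hlt : lt (stage_point s) (seq (S N))).
  { apply Hnext. right. exists (stage_patch s). split; [exact HN|exists s; auto]. }
  assert (Hpt : lt (stage_point s) s) by (eapply Tr; [exact Hlt|apply Hub]).
  destruct Hsa as [Hsa|Hsa].
  - apply (Irr s). eapply Tr; eauto.
  - rewrite <- Hsa in Hpt. exact (Irr s Hpt).
Qed.

Lemma fiber_forces h (X : W -> Prop) :
  countable X -> (forall a, X a -> fiber h a) ->
  exists s, PiStar_cond s /\ PiStar_le s r /\ forall a, X a -> forces_mem Y s a.
Proof.
  intros cX HX.
  destruct (classic (exists a0, X a0)) as [[a0 Xa0]|Hempty].
  2: { exists r. split; [|split]; [auto|apply pure_ext_le, pure_ext_refl|].
       intros a Xa. exfalso. eauto. }
  pose (D a := epsilon (inhabits a) (fun d => stage_patch d = h /\ stage_point d = a)).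
  assert (HD : forall a, X a -> stage_patch (D a) = h /\ stage_point (D a) = a)
    by (intros a Xa; apply (epsilon_spec (inhabits a)), HX, Xa).
  destruct (omega1_bounded Hw (A := fun d => exists a, X a /\ d = D a)) as [eta Heta].
  { apply countable_image, cX. }
  set (s := patch (stage_cond eta) h).
  assert (Key : forall a, X a ->
            PiStar_cond s /\ PiStar_le s r /\ forces_mem Y s a).
  { intros a Xa. destruct (HD a Xa) as [Eh Ea].
    destruct (stage_good (D a)) as (_ & Pd & Hpd & Ld & _ & Fd).
    rewrite Eh, Ea in *.
    assert (Peta : pure_ext (stage_cond eta) (stage_cond (D a)))
      by (apply stage_cond_chain, Heta; eauto).
    assert (Hpa : patch_for h (stage_cond (D a))) by (eapply patch_for_pure_ext; eauto).
    assert (Le : PiStar_le s (patch (stage_cond (D a)) h))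
      by (apply pure_ext_le, patch_pure_ext; auto).
    split; [|split].
    - apply patch_cond; [apply stage_cond_cond|]. eapply patch_for_pure_ext; eauto.
    - apply PiStar_le_trans with (patch (stage_cond (D a)) h); auto.
      apply PiStar_le_trans with (below (D a)); auto.
      apply pure_ext_le, below_pure_ext_base.
    - apply forces_mem_le with (patch (stage_cond (D a)) h); auto. }
  exists s. destruct (Key a0 Xa0) as (Cs & Ls & _). split; [|split]; auto.
  intros a Xa. apply Key, Xa.
Qed.

End Construction.

Theorem lemma3p7 (W : Type) (lt : W -> W -> Prop) (E : W -> Prop)
  (xs : W -> W -> Prop) (K : Type) :
  is_omega1 lt ->
  (forall g, E g -> is_limit lt g) ->
  stationary lt E ->
  clubsuit_seq lt E xs ->
  forall (Y : W -> (K -> nat -> option bool) -> Prop) (p : K -> nat -> option bool),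
    PiStar_cond p ->
    forces_unbounded lt Y p ->
    forces_clubsuit_hit E xs Y p.
Proof.
  intros Hw _ _ [Hcof Hguess] Y p _ Hu r Cr Lr.
  destruct (fiber_uncountable Hw Cr Lr Hu) as [h Hh].
  destruct (Hguess _ Hh) as [g [Eg Hg]].
  assert (Hxs : countable (xs g)).
  { pose proof Hw as (_ & _ & _ & _ & _ & Seg).
    apply countable_sub with (fun d => lt d g); [apply (Hcof g Eg)|apply Seg]. }
  destruct (fiber_forces Cr Lr Hu Hxs Hg) as (s & Cs & Ls & Fs).
  exists s, g. auto.
Qed.
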